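(* Let $b>2$ and $d\in\{1,\dots,b-1\}$. Then $H^{(0)}>b\log b-b\log\!\left(1+\frac1d\right)$. Consequently $H^{(0)}>b\log(b/2)$.
   Context: For an integer $n\ge0$, $k(n)$ denotes the number of occurrences of the digit $d$ in the base-$b$ representation of $n$ without leading zeros. $H^{(0)}=\sum_{n\ge1,\ k(n)=0}1/n$ is the sum of reciprocals of positive integers whose base-$b$ representation does not contain the digit $d$. *)

From Stdlib Require Import Reals Arith.
From Coquelicot Require Import Coquelicot.
Open Scope R_scope.

(* Number of occurrences of digit d in the base-b representation of n
   (no leading zeros).  [fuel] bounds the recursion; fuel = n suffices. *)
Fixpoint digit_count_aux (fuel b d n : nat) : nat :=
  match fuel with
  | O => O
  | S f =>
      if Nat.eqb n 0 then O
      else ((if Nat.eqb (Nat.modulo n b) d then 1 else 0)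
            + digit_count_aux f b d (Nat.div n b))%nat
  end.

Definition digit_count (b d n : nat) : nat := digit_count_aux n b d n.

Definition kempner_term (b d n : nat) : R :=
  if (Nat.ltb 0 n && Nat.eqb (digit_count b d n) 0)%bool then / INR n else 0.

(* H^(0) = sum_{n>=1, k(n)=0} 1/n, as the limit (in Rbar) of the
   nondecreasing partial sums; this limit always exists in Rbar. *)
Definition H0 (b d : nat) : Rbar :=
  Lim_seq (fun N => sum_f_R0 (kempner_term b d) N).

From Stdlib Require Import Reals Arith Lia Lra.
From Coquelicot Require Import Coquelicot.
Open Scope R_scope.

(** Group the positive integers free of the digit [d] by their leading block
    [m].  If [m] is itself free of [d], the terms whose expansion begins with
    [m] sum to more than [b (ln (m+1) - ln m)]: the children [b m + j],
    [j <> d], carry [b (ln (m+1) - ln m) - b (ln (b m + d + 1) - ln (b m + d))]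
    by telescoping, and the missing child is overcompensated by the term [1/m]
    itself, since [b ln (1 + 1/(b m + d)) <= b / (b m + d) < 1/m].  Cutting
    the digit tree at depth [N] costs an error of order [(1 - 1/b)^N].
    Summing over the leading digits [j <> 0, d] telescopes to
    [b ln b - b ln (1 + 1/d)], and the positive surplus of a single leading
    digit makes the inequality strict. *)

Fixpoint rsum (n : nat) (f : nat -> R) : R :=
  match n with O => 0 | S n' => rsum n' f + f n' end.

Lemma rsum_ext n f g : (forall i, (i < n)%nat -> f i = g i) -> rsum n f = rsum n g.
Proof.
  induction n as [|n IH]; cbn [rsum]; intros H; [reflexivity|].
  rewrite IH by (intros; apply H; lia). now rewrite H by lia.
Qed.

Lemma rsum_le n f g : (forall i, (i < n)%nat -> f i <= g i) -> rsum n f <= rsum n g.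
Proof.
  induction n as [|n IH]; cbn [rsum]; intros H; [lra|].
  apply Rplus_le_compat; [apply IH; intros|]; apply H; lia.
Qed.

Lemma rsum_zero n : rsum n (fun _ => 0) = 0.
Proof. induction n as [|n IH]; cbn [rsum]; [|rewrite IH]; ring. Qed.

Lemma rsum_nonneg n f : (forall i, (i < n)%nat -> 0 <= f i) -> 0 <= rsum n f.
Proof. intros H. rewrite <- (rsum_zero n). now apply rsum_le. Qed.

Lemma rsum_add n f g : rsum n (fun i => f i + g i) = rsum n f + rsum n g.
Proof. induction n as [|n IH]; cbn [rsum]; [|rewrite IH]; ring. Qed.

Lemma rsum_sub n f g : rsum n (fun i => f i - g i) = rsum n f - rsum n g.
Proof. induction n as [|n IH]; cbn [rsum]; [|rewrite IH]; ring. Qed.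

Lemma rsum_mult_l n c f : rsum n (fun i => c * f i) = c * rsum n f.
Proof. induction n as [|n IH]; cbn [rsum]; [|rewrite IH]; ring. Qed.

Lemma rsum_const n c : rsum n (fun _ => c) = INR n * c.
Proof. induction n as [|n IH]; cbn [rsum]; [|rewrite S_INR, IH]; simpl; ring. Qed.

Lemma rsum_split a c f : rsum (a + c) f = rsum a f + rsum c (fun i => f (a + i)%nat).
Proof.
  induction c as [|c IH]; cbn [rsum].
  - rewrite Nat.add_0_r; ring.
  - rewrite Nat.add_succ_r; cbn [rsum]; rewrite IH; ring.
Qed.

Lemma rsum_blocks n B f :
  rsum (n * B) f = rsum n (fun i => rsum B (fun t => f (i * B + t)%nat)).
Proof.
  induction n as [|n IH]; cbn [rsum]; [reflexivity|].
  now rewrite Nat.mul_succ_l, rsum_split, IH.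
Qed.

Lemma rsum_swap n m f :
  rsum n (fun i => rsum m (fun j => f i j)) = rsum m (fun j => rsum n (fun i => f i j)).
Proof.
  induction n as [|n IH]; cbn [rsum].
  - now rewrite rsum_zero.
  - now rewrite IH, <- rsum_add.
Qed.

Lemma rsum_telescope n a : rsum n (fun k => a (S k) - a k) = a n - a O.
Proof. induction n as [|n IH]; cbn [rsum]; [|rewrite IH]; ring. Qed.

Lemma rsum_drop n e f :
  (e < n)%nat -> rsum n (fun j => if Nat.eqb j e then 0 else f j) = rsum n f - f e.
Proof.
  induction n as [|n IH]; intros He; [lia|]. cbn [rsum].
  destruct (Nat.eq_dec e n) as [->|Hne].
  - rewrite Nat.eqb_refl, (rsum_ext n _ f); [ring|].
    intros i Hi. destruct (Nat.eqb_spec i n); [lia|reflexivity].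
  - rewrite IH by lia. destruct (Nat.eqb_spec n e); [lia|ring].
Qed.

Lemma rsum_pos n f i :
  (forall j, (j < n)%nat -> 0 <= f j) -> (i < n)%nat -> 0 < f i -> 0 < rsum n f.
Proof.
  induction n as [|n IH]; intros H Hi Hf; [lia|]. cbn [rsum].
  assert (Hn : 0 <= f n) by (apply H; lia).
  destruct (Nat.eq_dec i n) as [->|Hne].
  - pose proof (rsum_nonneg n f (fun j Hj => H j ltac:(lia))). lra.
  - pose proof (IH (fun j Hj => H j ltac:(lia)) ltac:(lia) Hf). lra.
Qed.

Lemma sum_f_R0_rsum f N : sum_f_R0 f N = rsum (S N) f.
Proof. induction N as [|N IH]; cbn [rsum sum_f_R0]; [ring|now rewrite IH]. Qed.

Lemma Lim_seq_sum_f_R0_gt (f : nat -> R) (X D C q : R) :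
  (forall n, 0 <= f n) -> 0 < D -> 0 <= C -> 0 <= q < 1 ->
  (forall N, exists n, X + D - q ^ N * C <= rsum n f) ->
  Rbar_lt X (Lim_seq (sum_f_R0 f)).
Proof.
  intros Hf HD HC Hq Hbound.
  set (y := D / (C + 1)).
  assert (Hy : 0 < y) by (apply Rdiv_lt_0_compat; lra).
  destruct (pow_lt_1_zero q ltac:(rewrite Rabs_pos_eq; lra) y Hy) as [N HN].
  specialize (HN N (Nat.le_refl N)). rewrite Rabs_pos_eq in HN by (apply pow_le; lra).
  assert (Herror : q ^ N * C < D).
  { assert (y * C = D - y) by (unfold y; field; lra).
    pose proof (Rmult_le_compat_r C _ _ HC (Rlt_le _ _ HN)). lra. }
  destruct (Hbound N) as [n Hn].
  assert (Hgrowing : Un_growing (sum_f_R0 f)) by (intros k; simpl; pose proof (Hf (S k)); lra).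
  apply Rbar_lt_le_trans with (sum_f_R0 f n).
  - simpl. rewrite sum_f_R0_rsum. cbn [rsum]. pose proof (Hf n). lra.
  - rewrite <- (Lim_seq_const (sum_f_R0 f n)). apply Lim_seq_le_loc.
    exists n. intros k Hk. now apply tech9.
Qed.

Lemma ln_1_plus_le y : -1 < y -> ln (1 + y) <= y.
Proof.
  intros Hy. rewrite <- (ln_exp y) at 2. apply ln_le; [lra|apply exp_ineq1_le].
Qed.

Definition ln_gap (x : nat) : R := ln (INR (S x)) - ln (INR x).

Lemma ln_gap_eq x : (1 <= x)%nat -> ln_gap x = ln (1 + / INR x).
Proof.
  intros Hx. assert (0 < INR x) by (apply lt_0_INR; lia).
  unfold ln_gap. rewrite <- ln_div by (try apply lt_0_INR; lia || lra).
  f_equal. rewrite S_INR. field. lra.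
Qed.

Lemma ln_gap_le_inv x : (1 <= x)%nat -> ln_gap x <= / INR x.
Proof.
  intros Hx. rewrite ln_gap_eq by exact Hx. apply ln_1_plus_le.
  pose proof (Rinv_0_lt_compat (INR x) ltac:(apply lt_0_INR; lia)). lra.
Qed.

Lemma ln_gap_children b m : (0 < b)%nat -> (1 <= m)%nat ->
  rsum b (fun j => ln_gap (b * m + j)) = ln_gap m.
Proof.
  intros Hb Hm.
  rewrite (rsum_ext b _ (fun k => ln (INR (b * m + S k)) - ln (INR (b * m + k)))).
  2:{ intros i _. unfold ln_gap. now rewrite Nat.add_succ_r. }
  rewrite (rsum_telescope b (fun k => ln (INR (b * m + k)))).
  assert (0 < INR b) by (apply lt_0_INR; lia).
  assert (0 < INR m) by (apply lt_0_INR; lia).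
  replace (b * m + b)%nat with (b * S m)%nat by ring.
  unfold ln_gap. rewrite Nat.add_0_r, !mult_INR, !ln_mult by (try apply lt_0_INR; lia || lra).
  ring.
Qed.

Lemma ln_div_2_le b d : (0 < b)%nat -> (1 <= d)%nat ->
  INR b * ln (INR b / 2) <= INR b * ln (INR b) - INR b * ln (1 + / INR d).
Proof.
  intros Hb Hd.
  assert (HB : 0 < INR b) by (apply lt_0_INR; lia).
  assert (HD : 0 < / INR d <= 1).
  { split; [apply Rinv_0_lt_compat, lt_0_INR; lia|].
    rewrite <- Rinv_1. apply Rinv_le_contravar; [lra|apply (le_INR 1); lia]. }
  assert (Hln : ln (1 + / INR d) <= ln 2) by (apply ln_le; lra).
  rewrite ln_div by lra.
  pose proof (Rmult_le_compat_l (INR b) _ _ (Rlt_le _ _ HB) Hln). lra.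
Qed.

Lemma one_sub_inv_bounds b : (1 < b)%nat -> 0 <= 1 - / INR b < 1.
Proof.
  intros Hb.
  assert (0 < / INR b < 1).
  { split; [apply Rinv_0_lt_compat, lt_0_INR; lia|].
    rewrite <- Rinv_1. apply Rinv_lt_contravar; [|apply (lt_INR 1); lia].
    rewrite Rmult_1_l. apply lt_0_INR; lia. }
  lra.
Qed.

Lemma kempner_term_nonneg b d n : 0 <= kempner_term b d n.
Proof.
  unfold kempner_term. destruct (Nat.ltb_spec 0 n), (Nat.eqb _ 0); simpl; try lra.
  apply Rlt_le, Rinv_0_lt_compat, lt_0_INR; lia.
Qed.

Lemma kempner_term_free b d m :
  (1 <= m)%nat -> digit_count b d m = 0%nat -> kempner_term b d m = / INR m.
Proof.
  unfold kempner_term. intros Hm ->.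
  now destruct (Nat.ltb_spec 0 m); [|lia].
Qed.

Section DigitTree.

Variables b d : nat.
Hypothesis b_gt1 : (1 < b)%nat.

Definition digit_free (n : nat) : Prop := digit_count b d n = 0%nat.

Lemma digit_count_aux_fuel f1 f2 n : (n <= f1)%nat -> (n <= f2)%nat ->
  digit_count_aux f1 b d n = digit_count_aux f2 b d n.
Proof.
  revert f2 n. induction f1 as [|f1 IH]; intros f2 n H1 H2.
  - replace n with 0%nat by lia. now destruct f2.
  - destruct f2 as [|f2]; [now replace n with 0%nat by lia|].
    cbn [digit_count_aux]. destruct (Nat.eqb_spec n 0); [reflexivity|].
    assert (n / b < n)%nat by (apply Nat.div_lt; lia).
    f_equal. apply IH; lia.
Qed.

Lemma digit_count_step n : (1 <= n)%nat ->
  digit_count b d n = ((if Nat.eqb (n mod b) d then 1 else 0) + digit_count b d (n / b))%nat.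
Proof.
  intros Hn. unfold digit_count. destruct n as [|n]; [lia|].
  cbn [digit_count_aux Nat.eqb]. f_equal.
  assert (S n / b < S n)%nat by (apply Nat.div_lt; lia).
  apply digit_count_aux_fuel; lia.
Qed.

Lemma digit_free_append m j :
  (j < b)%nat -> j <> d -> digit_free m -> digit_free (b * m + j).
Proof.
  unfold digit_free. intros Hj Hjd Hm.
  destruct (Nat.eq_dec (b * m + j) 0) as [->|Hpos]; [reflexivity|].
  rewrite digit_count_step by lia.
  rewrite <- (Nat.mod_unique (b * m + j) b m j), <- (Nat.div_unique (b * m + j) b m j) by lia.
  destruct (Nat.eqb_spec j d); [lia|exact Hm].
Qed.

(* The terms [n] whose base-[b] expansion extends that of [m] by at most [N] digits. *)
Definition subtree_sum (N m : nat) : R :=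
  rsum (S N) (fun k => rsum (b ^ k) (fun t => kempner_term b d (m * b ^ k + t))).

Lemma subtree_sum_nonneg N m : 0 <= subtree_sum N m.
Proof.
  apply rsum_nonneg; intros. apply rsum_nonneg; intros. apply kempner_term_nonneg.
Qed.

Lemma subtree_sum_succ N m :
  subtree_sum (S N) m = kempner_term b d m + rsum b (fun j => subtree_sum N (b * m + j)).
Proof.
  unfold subtree_sum. replace (S (S N)) with (1 + S N)%nat by lia.
  rewrite rsum_split. f_equal.
  - cbn [rsum]. rewrite Nat.pow_0_r. cbn [rsum].
    now rewrite Nat.mul_1_r, Nat.add_0_r, !Rplus_0_l.
  - rewrite rsum_swap. apply rsum_ext. intros k _.
    change (b ^ (1 + k))%nat with (b * b ^ k)%nat. rewrite rsum_blocks.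
    apply rsum_ext; intros j _. apply rsum_ext; intros t _. f_equal. ring.
Qed.

Lemma subtree_sum_leading_digits N :
  rsum (b - 1) (fun j => subtree_sum N (S j)) = rsum (b ^ S N) (kempner_term b d).
Proof.
  assert (Hall : rsum b (subtree_sum N)
                 = rsum (S N) (fun k => rsum (b ^ S k) (kempner_term b d))).
  { unfold subtree_sum. rewrite rsum_swap. apply rsum_ext; intros k _.
    change (b ^ S k)%nat with (b * b ^ k)%nat. now rewrite rsum_blocks. }
  assert (Hzero : rsum b (subtree_sum N) = subtree_sum N 0 + rsum (b - 1) (fun j => subtree_sum N (S j))).
  { replace b with (1 + (b - 1))%nat at 1 by lia. rewrite rsum_split.
    cbn [rsum]. now rewrite Rplus_0_l. }
  (* digit [0] contributes the blocks [[0, b^k)], so removing it telescopes *)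
  pose proof (rsum_telescope (S N) (fun k => rsum (b ^ k) (kempner_term b d))) as Htele.
  rewrite rsum_sub, <- Hall in Htele. cbn [rsum] in Htele |- *.
  rewrite Nat.pow_0_r in Htele. cbn [rsum] in Htele.
  change (subtree_sum N 0) with (rsum (S N) (fun k => rsum (b ^ k) (kempner_term b d))) in Hzero.
  replace (kempner_term b d 0) with 0 in Htele by reflexivity.
  cbn [rsum] in Hzero. lra.
Qed.

Definition leading_digit_sum (F : nat -> R) : R :=
  rsum (b - 1) (fun j => if Nat.eqb (S j) d then 0 else F (S j)).

Lemma leading_digit_sum_nonneg F : (forall j, (1 <= j)%nat -> 0 <= F j) ->
  0 <= leading_digit_sum F.
Proof.
  intros HF. apply rsum_nonneg. intros j _.
  destruct (Nat.eqb (S j) d); [lra|]. apply HF, le_n_S, Nat.le_0_l.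
Qed.

Definition surplus (m : nat) : R := / INR m - INR b * ln_gap (b * m + d).

Lemma surplus_pos m : (1 <= d)%nat -> (1 <= m)%nat -> 0 < surplus m.
Proof.
  intros Hd Hm. unfold surplus.
  assert (0 < INR b) by (apply lt_0_INR; lia).
  assert (0 < INR m) by (apply lt_0_INR; lia).
  assert (0 < INR d) by (apply lt_0_INR; lia).
  pose proof (Rmult_le_compat_l (INR b) _ _ ltac:(lra) (ln_gap_le_inv (b * m + d) ltac:(lia))).
  rewrite plus_INR, mult_INR in *.
  assert (Hgap : / INR m - INR b * / (INR b * INR m + INR d)
                 = INR d / (INR m * (INR b * INR m + INR d))) by (field; split; nra).
  assert (0 < INR d / (INR m * (INR b * INR m + INR d))) by (apply Rdiv_lt_0_compat; nra).
  lra.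
Qed.

Lemma leading_digit_sum_surplus_pos :
  (1 <= d)%nat -> (2 < b)%nat -> 0 < leading_digit_sum surplus.
Proof.
  intros Hd Hb.
  assert (Hterms : forall j, (j < b - 1)%nat ->
                     0 <= (if Nat.eqb (S j) d then 0 else surplus (S j))).
  { intros j _. destruct (Nat.eqb (S j) d); [lra|]. apply Rlt_le, surplus_pos; lia. }
  destruct (Nat.eq_dec d 1) as [Hd1|Hd1].
  - apply (rsum_pos _ _ 1); [exact Hterms|lia|].
    destruct (Nat.eqb_spec 2 d); [lia|]. apply surplus_pos; lia.
  - apply (rsum_pos _ _ 0); [exact Hterms|lia|].
    destruct (Nat.eqb_spec 1 d); [lia|]. apply surplus_pos; lia.
Qed.

Section LowerBound.

Hypothesis d_pos : (1 <= d)%nat.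
Hypothesis d_lt_b : (d < b)%nat.

Lemma subtree_sum_succ_lower N m : (1 <= m)%nat -> digit_free m ->
  (forall j, (j < b)%nat -> j <> d ->
     INR b * ln_gap (b * m + j) - (1 - / INR b) ^ N * (INR b / INR (b * m + j))
     <= subtree_sum N (b * m + j)) ->
  INR b * ln_gap m + surplus m - (1 - / INR b) ^ S N * (INR b / INR m)
  <= subtree_sum (S N) m.
Proof.
  intros Hm Hfree Hchildren.
  assert (0 < INR b) by (apply lt_0_INR; lia).
  assert (0 < INR m) by (apply lt_0_INR; lia).
  assert (Hq : 0 <= (1 - / INR b) ^ N) by apply pow_le, one_sub_inv_bounds, b_gt1.
  set (c := (1 - / INR b) ^ N * (INR b / INR (b * m))).
  (* each of the [b - 1] children [b m + j] has truncation error at most [c] *)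
  assert (Hsum : rsum b (fun j => if Nat.eqb j d then 0 else INR b * ln_gap (b * m + j))
                 - rsum b (fun j => if Nat.eqb j d then 0 else c)
                 <= rsum b (fun j => subtree_sum N (b * m + j))).
  { rewrite <- rsum_sub. apply rsum_le. intros j Hj.
    destruct (Nat.eqb_spec j d) as [_|Hjd].
    - rewrite Rminus_0_r. apply subtree_sum_nonneg.
    - eapply Rle_trans; [|exact (Hchildren j Hj Hjd)].
      apply Rplus_le_compat_l, Ropp_le_contravar, Rmult_le_compat_l; [exact Hq|].
      apply Rmult_le_compat_l; [lra|]. apply Rinv_le_contravar.
      + apply lt_0_INR; nia.
      + apply le_INR; lia. }
  rewrite !rsum_drop, rsum_mult_l, ln_gap_children, rsum_const in Hsum by lia.
  assert (Hc : INR b * c - c = (1 - / INR b) ^ S N * (INR b / INR m)).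
  { unfold c. rewrite mult_INR. cbn [pow]. field. lra. }
  rewrite subtree_sum_succ, kempner_term_free by assumption.
  unfold surplus. lra.
Qed.

Lemma subtree_sum_lower N m : (1 <= m)%nat -> digit_free m ->
  INR b * ln_gap m - (1 - / INR b) ^ N * (INR b / INR m) <= subtree_sum N m.
Proof.
  revert m. induction N as [|N IH]; intros m Hm Hfree.
  - unfold subtree_sum. cbn [rsum pow]. rewrite Nat.pow_0_r. cbn [rsum].
    rewrite Nat.mul_1_r, Nat.add_0_r, kempner_term_free by assumption.
    assert (0 < INR b) by (apply lt_0_INR; lia).
    assert (0 < / INR m) by (apply Rinv_0_lt_compat, lt_0_INR; lia).
    pose proof (Rmult_le_compat_l (INR b) _ _ ltac:(lra) (ln_gap_le_inv m Hm)).
    unfold Rdiv. lra.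
  - pose proof (surplus_pos m d_pos Hm).
    enough (INR b * ln_gap m + surplus m - (1 - / INR b) ^ S N * (INR b / INR m)
            <= subtree_sum (S N) m) by lra.
    apply subtree_sum_succ_lower; [assumption..|].
    intros j Hj Hjd. apply IH; [nia|]. now apply digit_free_append.
Qed.

Lemma leading_digit_sum_ln_gap :
  leading_digit_sum ln_gap = ln (INR b) - ln (1 + / INR d).
Proof.
  unfold leading_digit_sum.
  rewrite (rsum_ext (b - 1) _ (fun j => if Nat.eqb j (d - 1) then 0 else ln_gap (S j))).
  2:{ intros i _. destruct (Nat.eqb_spec (S i) d), (Nat.eqb_spec i (d - 1)); lia || reflexivity. }
  rewrite rsum_drop by lia.
  rewrite (rsum_ext (b - 1) _ (fun k => ln (INR (S (S k))) - ln (INR (S k)))) by reflexivity.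
  rewrite (rsum_telescope (b - 1) (fun k => ln (INR (S k)))).
  replace (S (b - 1)) with b by lia. replace (S (d - 1)) with d by lia.
  rewrite (ln_gap_eq d d_pos). simpl (INR 1). rewrite ln_1. ring.
Qed.

Lemma partial_sum_lower N :
  INR b * leading_digit_sum ln_gap + leading_digit_sum surplus
  - (1 - / INR b) ^ N * leading_digit_sum (fun j => INR b / INR j)
  <= rsum (b ^ S (S N)) (kempner_term b d).
Proof.
  assert (0 < INR b) by (apply lt_0_INR; lia).
  pose proof (one_sub_inv_bounds b b_gt1) as Hq.
  assert (Hweaken : (1 - / INR b) ^ S N * leading_digit_sum (fun j => INR b / INR j)
                    <= (1 - / INR b) ^ N * leading_digit_sum (fun j => INR b / INR j)).
  { apply Rmult_le_compat_r.
    - apply leading_digit_sum_nonneg. intros j Hj.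
      apply Rlt_le, Rdiv_lt_0_compat; [lra|apply lt_0_INR; lia].
    - cbn [pow]. pose proof (pow_le _ N (proj1 Hq)). nra. }
  enough (INR b * leading_digit_sum ln_gap + leading_digit_sum surplus
          - (1 - / INR b) ^ S N * leading_digit_sum (fun j => INR b / INR j)
          <= rsum (b ^ S (S N)) (kempner_term b d)) by lra.
  unfold leading_digit_sum.
  rewrite <- !rsum_mult_l, <- rsum_add, <- rsum_sub, <- subtree_sum_leading_digits.
  apply rsum_le. intros j Hj.
  destruct (Nat.eqb_spec (S j) d) as [_|Hjd].
  - rewrite !Rmult_0_r, Rplus_0_r, Rminus_0_r. apply subtree_sum_nonneg.
  - assert (Hfree : digit_free (S j)).
    { replace (S j) with (b * 0 + S j)%nat by lia. apply digit_free_append; [lia|lia|reflexivity]. }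
    apply subtree_sum_succ_lower; [lia|exact Hfree|].
    intros k Hk Hkd. apply subtree_sum_lower; [nia|]. now apply digit_free_append.
Qed.

End LowerBound.

End DigitTree.

Theorem mainTheorem4 (b d : nat) :
  (2 < b)%nat -> (1 <= d <= b - 1)%nat ->
  Rbar_lt (Finite (INR b * ln (INR b) - INR b * ln (1 + / INR d))) (H0 b d) /\
  Rbar_lt (Finite (INR b * ln (INR b / 2))) (H0 b d).
Proof.
  intros Hb [Hd1 Hd2].
  assert (Hb1 : (1 < b)%nat) by lia.
  assert (Hdb : (d < b)%nat) by lia.
  assert (HB : 0 < INR b) by (apply lt_0_INR; lia).
  assert (Hmain : Rbar_lt (INR b * ln (INR b) - INR b * ln (1 + / INR d)) (H0 b d)).
  { replace (INR b * ln (INR b) - INR b * ln (1 + / INR d))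
      with (INR b * leading_digit_sum b d ln_gap)
      by (rewrite leading_digit_sum_ln_gap by assumption; ring).
    apply (Lim_seq_sum_f_R0_gt _ _ (leading_digit_sum b d (surplus b d))
             (leading_digit_sum b d (fun j => INR b / INR j)) (1 - / INR b)).
    - apply kempner_term_nonneg.
    - apply leading_digit_sum_surplus_pos; lia.
    - apply leading_digit_sum_nonneg. intros j Hj.
      apply Rlt_le, Rdiv_lt_0_compat; [lra|apply lt_0_INR; lia].
    - now apply one_sub_inv_bounds.
    - intros N. exists (b ^ S (S N))%nat. now apply partial_sum_lower. }
  split; [exact Hmain|].
  eapply Rbar_le_lt_trans; [|exact Hmain].
  apply ln_div_2_le; lia.
Qed.
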